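(* Let $m\ge2$, $n\ge2$ and $\mathcal{I}\subseteq\mathbb{R}^{m\times n}$ any set of instances of the goods allocation problem. An allocation function $A$ over $\mathcal{I}$ is proportionable (in the goods sense) if and only if for every $v\in\mathcal{I}$, $\sum_{i\in[m]}v_i(A(v)_i)\ge\frac1m\sum_{i\in[m]}v_i([n])$.
   Context: Goods allocation: $m$ agents $[m]$, $n$ goods $[n]$; an instance is a matrix $v$ with $v_{i,j}$ the value of agent $i$ for good $j$, and $v_i(S)=\sum_{j\in S}v_{i,j}$. An allocation is a tuple $(A_1,\dots,A_m)$ of pairwise disjoint subsets of $[n]$ with union $[n]$. A mechanism $(A,q)$ over $\mathcal{I}$ assigns to each $v$ an allocation $A(v)$ and transfers $q(v)\in\mathbb{R}^m$; agent $i$'s utility is $v_i(A_i)-q_i$. It is proportional if for every $v\in\mathcal{I}$ and $i\in[m]$: $v_i(A_i)-q_i\ge\frac1m\sum_{j\in[m]}(v_i(A_j)-q_j)$. An allocation function $A$ is proportionable if some transfer function $q$ makes $(A,q)$ proportional. *)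

From mathcomp Require Import all_boot all_order all_algebra.
Set Implicit Arguments. Unset Strict Implicit. Unset Printing Implicit Defensive.
Import Order.TTheory GRing.Theory Num.Theory.
Local Open Scope ring_scope.

Section Defs.
Variables (R : realFieldType) (m n : nat).

(* An instance: value matrix, v i j = value of agent i for good j. *)
Definition instance := 'M[R]_(m, n).

Definition valu (v : instance) (i : 'I_m) (S : {set 'I_n}) : R :=
  \sum_(j in S) v i j.

Definition allocation := {ffun 'I_m -> {set 'I_n}}.

Definition is_allocation (Al : allocation) : Prop :=
  (forall i k : 'I_m, i != k -> [disjoint Al i & Al k]) /\
  (\bigcup_(i < m) Al i = [set: 'I_n]).

Definition proportional (I : instance -> Prop) (A : instance -> allocation)
    (q : instance -> 'I_m -> R) : Prop :=
  forall v, I v -> forall i : 'I_m,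
    valu v i (A v i) - q v i >=
      m%:R^-1 * \sum_(j < m) (valu v i (A v j) - q v j).

Definition proportionable (I : instance -> Prop) (A : instance -> allocation) : Prop :=
  exists q : instance -> 'I_m -> R, proportional I A q.

End Defs.

From mathcomp Require Import all_boot all_order all_algebra.
Set Implicit Arguments. Unset Strict Implicit. Unset Printing Implicit Defensive.
Import Order.TTheory GRing.Theory Num.Theory.
Local Open Scope ring_scope.

(* Summing the proportionality constraints over all agents cancels the transfers
   and leaves exactly the welfare bound. Conversely, if the bound holds, charge
   each agent its value for its own bundle minus its proportional share: every
   agent then gets utility equal to its share, and the bound is precisely what
   makes the remaining average nonnegative. Everything depends on the values
   v_i(A_j) only through the matrix u i j := v_i(A_j), whose row sums are the
   v_i([n]) because an allocation partitions the goods. *)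

Lemma sum_valu_allocation (R : realFieldType) (m n : nat) (v : instance R m n)
    (Al : allocation m n) (i : 'I_m) :
  is_allocation Al -> \sum_(j < m) valu v i (Al j) = valu v i [set: 'I_n].
Proof.
move=> [disjAl coverAl]; rewrite /valu -coverAl.
by rewrite (partition_disjoint_bigcup _ (fun k => v i k) disjAl).
Qed.

Section BundleValueMatrix.
Variables (R : numFieldType) (m : nat).
Hypothesis m_gt0 : (0 < m)%N.
Variable u : 'I_m -> 'I_m -> R.

Let D := \sum_(i < m) u i i.
Let S := \sum_(i < m) \sum_(j < m) u i j.

Lemma sum_mean_shareB (q : 'I_m -> R) :
  \sum_(i < m) m%:R^-1 * \sum_(j < m) (u i j - q j) = m%:R^-1 * S - \sum_(j < m) q j.
Proof.
rewrite -big_distrr /=; under eq_bigr do rewrite sumrB.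
rewrite sumrB sumr_const card_ord -[(\sum_(j < m) q j) *+ m]mulr_natr mulrBr mulrCA mulVf ?mulr1 //.
by rewrite pnatr_eq0 -lt0n.
Qed.

Lemma proportional_welfare_bound (q : 'I_m -> R) :
  (forall i, m%:R^-1 * \sum_(j < m) (u i j - q j) <= u i i - q i) ->
  m%:R^-1 * S <= D.
Proof.
move=> propq; have := @ler_sum _ _ (index_enum _) xpredT _ _ (fun i _ => propq i).
by rewrite sum_mean_shareB sumrB lerD2r.
Qed.

Definition equal_share_transfer (i : 'I_m) : R :=
  u i i - m%:R^-1 * \sum_(j < m) u i j.

Lemma sum_equal_share_transfer :
  \sum_(i < m) equal_share_transfer i = D - m%:R^-1 * S.
Proof. by rewrite sumrB -big_distrr. Qed.

Lemma equal_share_transfer_proportional :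
  m%:R^-1 * S <= D -> forall i,
  m%:R^-1 * \sum_(j < m) (u i j - equal_share_transfer j) <= u i i - equal_share_transfer i.
Proof.
move=> welfare i; rewrite sumrB sum_equal_share_transfer /equal_share_transfer.
rewrite subKr ler_pM2l ?invr_gt0 ?ltr0n //.
by rewrite gerBl subr_ge0.
Qed.

End BundleValueMatrix.

Theorem mainTheorem7 (R : realFieldType) (m n : nat) (hm : (2 <= m)%N) (hn : (2 <= n)%N)
    (I : instance R m n -> Prop) (A : instance R m n -> allocation m n)
    (hA : forall v, I v -> is_allocation (A v)) :
  proportionable I A <->
  (forall v, I v ->
     \sum_(i < m) valu v i (A v i) >= m%:R^-1 * \sum_(i < m) valu v i [set: 'I_n]).
Proof.
have m_gt0 : (0 < m)%N by apply: leq_trans hm.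
have row_sums v : I v -> \sum_(i < m) valu v i [set: 'I_n] =
    \sum_(i < m) \sum_(j < m) valu v i (A v j).
  by move=> Iv; apply: eq_bigr => i _; rewrite sum_valu_allocation //; apply: hA.
split.
- move=> [q propq] v Iv; rewrite row_sums //.
  exact: (proportional_welfare_bound m_gt0 (propq v Iv)).
- move=> welfare; exists (fun v => equal_share_transfer (fun i j => valu v i (A v j))).
  move=> v Iv i; apply: equal_share_transfer_proportional; first exact: m_gt0.
  by rewrite -row_sums //; apply: welfare.
Qed.
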